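(* Let $0<v_T<\tfrac12$ and $V_u>0$, and set $g_{\max}=F'(v_i)$ and $$g_\ast=\frac{F'(v_i)\,v_i-F(v_i)}{V_u}.$$ Then $g_\ast>0$, and for every $g$ with $g_\ast\le g<g_{\max}$ and every $k\ge 0$, the central cell fires when $v_u$ is raised from $0$ to $V_u$ if and only if $$k<\frac{F'(v_i)}{g}-1.$$
   Context: Fix $v_T\in(0,\tfrac12)$ and let $F(v)=v(v-v_T)(1-v)$, with local minimum at $v_{\min}$, local maximum at $v_{\max}$, inflection point $v_i=(1+v_T)/3$; $0<v_{\min}<v_T<v_i<v_{\max}<1$. Central-cell model: for $g>0$, real $k\ge0$ and upstream voltage $v_u$, $\frac{dv}{dt}=F(v)+g(v_u-v)-gkv$; equilibria solve $F(v)=g(k+1)v-gv_u$. Firing: given $V_u>0$, the central cell fires when $v_u$ is raised from $0$ to $V_u$ if there exist $v_{u,c}\in(0,V_u)$ and $v^*\in(v_{\min},v_i)$ with $F(v^* )=g(k+1)v^*-gv_{u,c}$ and $F'(v^* )=g(k+1)$ (a saddle-node collision of the rest and threshold equilibria). *)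

From Stdlib Require Import Reals Lra.
Open Scope R_scope.

Definition F (vT v : R) : R := v * (v - vT) * (1 - v).

Definition Fp (vT v : R) : R := -3 * v ^ 2 + 2 * (1 + vT) * v - vT.

Lemma Fp_is_derivative (vT v : R) : derivable_pt_lim (F vT) v (Fp vT v).
Proof.
  unfold F, Fp.
  assert (H : derivable_pt_lim
    (fun x => (x * (x - vT)) * (1 - x)) v
    (((1 * (v - vT)) + v * (1 - 0)) * (1 - v) + (v * (v - vT)) * (0 - 1))).
  { apply (derivable_pt_lim_mult (fun x => x * (x - vT)) (fun x => 1 - x)).
    - apply (derivable_pt_lim_mult id (fun x => x - vT)).
      + exact (derivable_pt_lim_id v).
      + apply (derivable_pt_lim_minus id (fct_cte vT)); [apply derivable_pt_lim_id | apply derivable_pt_lim_const].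
    - apply (derivable_pt_lim_minus (fct_cte 1) id); [apply derivable_pt_lim_const | apply derivable_pt_lim_id]. }
  replace (-3 * v ^ 2 + 2 * (1 + vT) * v - vT)
    with (((1 * (v - vT)) + v * (1 - 0)) * (1 - v) + (v * (v - vT)) * (0 - 1)) by ring.
  exact H.
Qed.

Definition vi (vT : R) : R := (1 + vT) / 3.

Definition vmin (vT : R) : R := ((1 + vT) - sqrt ((1 + vT) ^ 2 - 3 * vT)) / 3.
Definition vmax (vT : R) : R := ((1 + vT) + sqrt ((1 + vT) ^ 2 - 3 * vT)) / 3.

(* The central cell fires when v_u is raised from 0 to Vu: a saddle-node
   collision of the rest and threshold equilibria at some v_{u,c} in (0,Vu). *)
Definition fires (vT g k Vu : R) : Prop :=
  exists vuc vstar : R,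
    0 < vuc < Vu /\ vmin vT < vstar < vi vT /\
    F vT vstar = g * (k + 1) * vstar - g * vuc /\
    Fp vT vstar = g * (k + 1).

(* A tangency (saddle node) at v with coupling g (k+1) requires F'(v) = g (k+1),
   and then the critical upstream voltage is h(v) / g with h(v) = F'(v) v - F(v)
   = v^2 (1 + v_T - 2 v).  Since F' is a downward parabola with vertex at v_i,
   F'(v) = g (k+1) has a solution in (v_min, v_i) exactly when
   0 < g (k+1) < F'(v_i); and as h increases on (0, v_i), the critical voltage
   then stays below h(v_i) / g <= h(v_i) / g_* = V_u. *)

From Stdlib Require Import Reals Lra Psatz.
Open Scope R_scope.

(* [tangent_drop vT v] is g * v_{u,c} at a tangency point v; it is minus the
   intercept at 0 of the tangent line to F at v. *)
Definition tangent_drop (vT v : R) : R := Fp vT v * v - F vT v.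

Lemma tangent_drop_eq (vT v : R) : tangent_drop vT v = v ^ 2 * (1 + vT - 2 * v).
Proof. unfold tangent_drop, Fp, F; ring. Qed.

Lemma tangent_drop_pos (vT v : R) : 0 < v < (1 + vT) / 2 -> 0 < tangent_drop vT v.
Proof. intros Hv; rewrite tangent_drop_eq; apply Rmult_lt_0_compat; nra. Qed.

Lemma tangent_drop_lt_vi (vT v : R) :
  0 < v < vi vT -> tangent_drop vT v < tangent_drop vT (vi vT).
Proof.
  unfold vi; intros Hv; rewrite !tangent_drop_eq.
  assert (Hgap : ((1 + vT) / 3) ^ 2 * (1 + vT - 2 * ((1 + vT) / 3)) - v ^ 2 * (1 + vT - 2 * v)
                 = ((1 + vT) / 3 - v) ^ 2 * ((1 + vT) / 3 + 2 * v)) by field.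
  assert (0 < ((1 + vT) / 3 - v) ^ 2 * ((1 + vT) / 3 + 2 * v)) by
    (apply Rmult_lt_0_compat; [apply pow_lt|]; lra).
  lra.
Qed.

Lemma Fp_vertex (vT v : R) : Fp vT v = Fp vT (vi vT) - 3 * (v - vi vT) ^ 2.
Proof. unfold Fp, vi; field. Qed.

Lemma Fp_factor (vT v : R) : Fp vT v = - 3 * (v - vmin vT) * (v - vmax vT).
Proof.
  assert (Hsq : sqrt ((1 + vT) ^ 2 - 3 * vT) * sqrt ((1 + vT) ^ 2 - 3 * vT)
                = (1 + vT) ^ 2 - 3 * vT) by (apply sqrt_sqrt; nra).
  unfold Fp, vmin, vmax; nra.
Qed.

Lemma vi_lt_vmax (vT : R) : vi vT < vmax vT.
Proof.
  assert (0 < sqrt ((1 + vT) ^ 2 - 3 * vT)) by (apply sqrt_lt_R0; nra).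
  unfold vi, vmax; lra.
Qed.

Lemma vmin_lt_iff_Fp_pos (vT v : R) : v <= vi vT -> (vmin vT < v <-> 0 < Fp vT v).
Proof.
  intros Hv; rewrite Fp_factor.
  assert (Hmax : v < vmax vT) by (pose proof (vi_lt_vmax vT); lra).
  split; intros H; nra.
Qed.

Lemma vmin_pos (vT : R) : 0 < vT -> 0 < vmin vT.
Proof.
  intros HvT.
  assert (Hsq : sqrt ((1 + vT) ^ 2 - 3 * vT) * sqrt ((1 + vT) ^ 2 - 3 * vT)
                = (1 + vT) ^ 2 - 3 * vT) by (apply sqrt_sqrt; nra).
  assert (0 <= sqrt ((1 + vT) ^ 2 - 3 * vT)) by apply sqrt_pos.
  unfold vmin; nra.
Qed.

Lemma Fp_left_preimage (vT c : R) :
  0 < c < Fp vT (vi vT) -> exists v, vmin vT < v < vi vT /\ Fp vT v = c.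
Proof.
  intros Hc.
  set (d := sqrt ((Fp vT (vi vT) - c) / 3)).
  assert (Hd : 0 < d) by (apply sqrt_lt_R0; lra).
  assert (Hdd : d * d = (Fp vT (vi vT) - c) / 3) by (apply sqrt_sqrt; lra).
  assert (HFp : Fp vT (vi vT - d) = c) by (rewrite Fp_vertex; nra).
  exists (vi vT - d); split; [split|exact HFp].
  - apply vmin_lt_iff_Fp_pos; lra.
  - lra.
Qed.

Lemma lt_div_sub1_iff (k A g : R) : 0 < g -> (k < A / g - 1 <-> g * (k + 1) < A).
Proof.
  intros Hg.
  assert (HA : A / g * g = A) by (field; lra).
  split; intros H.
  - apply (Rmult_lt_compat_r g) in H; lra.
  - apply (Rmult_lt_reg_r g); lra.
Qed.

Lemma fires_coupling_lt_Fp_vi (vT g k Vu : R) : fires vT g k Vu -> g * (k + 1) < Fp vT (vi vT).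
Proof.
  intros (vuc & v & _ & Hv & _ & HFp).
  rewrite <- HFp, (Fp_vertex vT v).
  assert (Hne : v - vi vT <> 0) by lra.
  assert (0 < (v - vi vT) ^ 2) by nra.
  lra.
Qed.

Lemma fires_of_tangency (vT Vu g k v : R) : 0 < g ->
  vmin vT < v < vi vT -> Fp vT v = g * (k + 1) -> 0 < tangent_drop vT v < g * Vu ->
  fires vT g k Vu.
Proof.
  intros Hg Hv HFp Hdrop.
  exists (tangent_drop vT v / g), v.
  assert (Hvuc : tangent_drop vT v / g * g = tangent_drop vT v) by (field; lra).
  split; [|split; [exact Hv|split; [|exact HFp]]].
  - split.
    + apply Rdiv_lt_0_compat; lra.
    + apply (Rmult_lt_reg_r g); lra.
  - unfold tangent_drop in *; rewrite HFp; field; lra.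
Qed.

Theorem mainTheorem2 (vT Vu : R) (HvT : 0 < vT < 1 / 2) (HVu : 0 < Vu) :
  let gmax := Fp vT (vi vT) in
  let gstar := (Fp vT (vi vT) * vi vT - F vT (vi vT)) / Vu in
  0 < gstar /\
  forall g k : R, gstar <= g < gmax -> 0 <= k ->
    (fires vT g k Vu <-> k < Fp vT (vi vT) / g - 1).
Proof.
  intros gmax gstar.
  fold (tangent_drop vT (vi vT)) in gstar.
  assert (Hvi : 0 < vi vT < (1 + vT) / 2) by (unfold vi; lra).
  assert (Hgstar : 0 < gstar) by
    (apply Rdiv_lt_0_compat; [apply tangent_drop_pos|]; assumption).
  split; [exact Hgstar|].
  intros g k [Hgs _] Hk.
  assert (Hg : 0 < g) by lra.
  rewrite lt_div_sub1_iff by exact Hg.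
  split; [apply fires_coupling_lt_Fp_vi|].
  intros Hc.
  destruct (Fp_left_preimage vT (g * (k + 1))) as (v & Hv & HFp); [nra|].
  assert (Hv0 : 0 < v) by (pose proof (vmin_pos vT (proj1 HvT)); lra).
  apply (fires_of_tangency vT Vu g k v Hg Hv HFp).
  assert (Hmax : tangent_drop vT (vi vT) = gstar * Vu) by (unfold gstar; field; lra).
  pose proof (tangent_drop_lt_vi vT v (conj Hv0 (proj2 Hv))).
  split; [apply tangent_drop_pos; lra | nra].
Qed.
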